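(* For the asynchronous Sinkhorn iteration described in the context, the iterates $(u^{(\ell)},v^{(\ell)})$ converge to a solution $(u,v)\in\mathbb R_{++}^X\times\mathbb R_{++}^Y$ of the scaling problem, i.e. $\mathrm{diag}(u)K\mathrm{diag}(v)$ has row sums $\mu$ and column sums $\nu$, and $q^{(\ell)}\to1$.
   Context: $X,Y$ finite sets, $\mu\in\mathcal P(X)$, $\nu\in\mathcal P(Y)$ with strictly positive entries, $c\in\mathbb R_+^{X\times Y}$, $\varepsilon>0$, kernel $K(x,y)=\exp(-c(x,y)/\varepsilon)\mu(x)\nu(y)$. Asynchronous Sinkhorn iteration: given $v^{(0)}\in\mathbb R_{++}^Y$, for $\ell\ge0$: $u^{(\ell+1)}=\mu\oslash(Kv^{(\ell)})$, $\hat v^{(\ell+1)}=\nu\oslash(K^\top u^{(\ell+1)})$, $v^{(\ell+1)}=\min\{v^{(\ell)},\hat v^{(\ell+1)}\}$ componentwise, $\pi^{(\ell+1)}=\mathrm{diag}(u^{(\ell+1)})K\mathrm{diag}(v^{(\ell+1)})$, $q^{(\ell+1)}=\sum_{x,y}\pi^{(\ell+1)}(x,y)$; $\oslash$ is componentwise division. *)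

From HB Require Import structures.
From mathcomp Require Import all_boot all_order all_algebra.
From mathcomp Require Import all_classical all_reals all_analysis.
Set Implicit Arguments. Unset Strict Implicit. Unset Printing Implicit Defensive.
Import Order.TTheory GRing.Theory Num.Theory.
Local Open Scope ring_scope.

Section Sinkhorn.
Variables (R : realType) (X Y : finType).
Variables (mu : X -> R) (nu : Y -> R) (c : X -> Y -> R) (eps : R).

Definition kernelK (x : X) (y : Y) : R := expR (- c x y / eps) * mu x * nu y.

Definition Kv (v : Y -> R) (x : X) : R := \sum_(y : Y) kernelK x y * v y.
Definition KTu (u : X -> R) (y : Y) : R := \sum_(x : X) kernelK x y * u x.

Definition u_upd (v : Y -> R) (x : X) : R := mu x / Kv v x.
Definition vhat_upd (u : X -> R) (y : Y) : R := nu y / KTu u y.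

Fixpoint v_iter (v0 : Y -> R) (l : nat) : Y -> R :=
  match l with
  | 0 => v0
  | l'.+1 => fun y => Num.min (v_iter v0 l' y) (vhat_upd (u_upd (v_iter v0 l') ) y)
  end.

(* u_iter v0 l = u^(l) for l >= 1 (= mu ⊘ K v^(l-1));
   at l = 0 (where the paper leaves u^(0) undefined) it is conventionally
   mu ⊘ K v^(0), which does not affect limits. *)
Definition u_iter (v0 : Y -> R) (l : nat) : X -> R := u_upd (v_iter v0 l.-1).

Definition pi_iter (v0 : Y -> R) (l : nat) (x : X) (y : Y) : R :=
  u_iter v0 l x * kernelK x y * v_iter v0 l y.
Definition q_iter (v0 : Y -> R) (l : nat) : R :=
  \sum_(x : X) \sum_(y : Y) pi_iter v0 l x y.

End Sinkhorn.

(* Write T v := nu / K^T (mu / K v), so that v^(l+1) = min (v^(l), T v^(l)) and a positive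
   fixed point v of T gives the scaling (mu / K v, v).  T is monotone and 1-homogeneous.
   The potential Phi v := sum_x mu_x ln (K v)_x - sum_y nu_y ln v_y is scale invariant and,
   by concavity of ln, Phi (min (v, T v)) <= Phi v - gap, where the gap is positive as soon as
   T v < v somewhere.  A minimiser of Phi on a box [delta, 1]^Y, which contains a rescaling of
   every w with Phi w <= Phi 1, therefore satisfies v <= T v, hence v = T v
   because sum_y v_y (K^T (mu / K v))_y = 1 = sum_y (T v)_y (K^T (mu / K v))_y.
   A rescaled fixed point below v^(0) stays below every v^(l) by monotonicity, so the
   nonincreasing v^(l) converge to a positive limit v with v <= T v, i.e. to a fixed point;
   u^(l) and q^(l) then converge by continuity. *)

From Pilot Require Import Defs.
From HB Require Import structures.
From mathcomp Require Import all_boot all_order all_algebra.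
From mathcomp Require Import all_classical all_reals all_analysis.
From mathcomp Require Import ring lra.
Import Order.TTheory GRing.Theory Num.Theory.
Import numFieldNormedType.Exports.
Local Open Scope ring_scope.
Local Open Scope classical_set_scope.
Set Implicit Arguments. Unset Strict Implicit.
Import ArrowAsProduct.

Lemma inhabited_of_sum_neq0 (V : nmodType) (I : finType) (f : I -> V) :
  \sum_i f i != 0 -> inhabited I.
Proof.
have [i _ _|I0] := pickP (@predT I); first by constructor.
by rewrite big_pred0 ?eqxx.
Qed.

Lemma ler_sum_term (R : numDomainType) (I : finType) (f : I -> R) (i : I) :
  (forall j, 0 <= f j) -> f i <= \sum_j f j.
Proof. by move=> f_ge0; rewrite (bigD1 i) //= lerDl sumr_ge0. Qed.

Lemma sumr_gt0 (R : numDomainType) (I : finType) (i0 : I) (f : I -> R) :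
  (forall i, 0 < f i) -> 0 < \sum_i f i.
Proof.
by move=> f_gt0; apply: lt_le_trans (f_gt0 i0) (ler_sum_term _ _) => j; apply: ltW.
Qed.

Lemma lnB_le (R : realType) (a b : R) : 0 < a -> 0 < b -> ln b - ln a <= (b - a) / a.
Proof.
move=> a_gt0 b_gt0; rewrite -ln_div ?posrE // mulrBl divff ?gt_eqF //.
have := @le_ln1Dx R (b / a - 1); rewrite subrKC; apply.
by rewrite ltrBrDl subrr divr_gt0.
Qed.

Lemma ln_lt_subr1 (R : realType) (x : R) : 0 < x -> x != 1 -> ln x < x - 1.
Proof.
move=> x_gt0 x_neq1; rewrite -ltr_expR lnK ?posrE //.
by have := @expR_gt1Dx R (x - 1); rewrite subrKC; apply; rewrite subr_eq0.
Qed.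

Lemma compact_box (R : realType) (I : eqType) (a b : R) :
  compact [set w : I -> R | forall i, `[a, b] (w i)].
Proof.
exact: (@tychonoff I (fun _ => R) (fun _ => `[a, b]) (fun _ => @segment_compact R a b)).
Qed.

Lemma cvg_sum (V : topologicalZmodType) (I : finType) (T : Type)
    (F : set_system T) {FF : Filter F} (f : I -> T -> V) (a : I -> V) :
  (forall i, f i t @[t --> F] --> a i) -> \sum_i f i t @[t --> F] --> \sum_i a i.
Proof. by move=> fa; apply: cvg_big => //; exact: add_continuous. Qed.

Section Sinkhorn.
Variables (R : realType) (X Y : finType).
Variables (mu : X -> R) (nu : Y -> R) (c : X -> Y -> R) (eps : R).
Hypotheses (mu_gt0 : forall x, 0 < mu x) (mu1 : \sum_x mu x = 1).
Hypotheses (nu_gt0 : forall y, 0 < nu y) (nu1 : \sum_y nu y = 1).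
Variables (x0 : X) (y0 : Y).

Local Notation K := (kernelK mu nu c eps).
Local Notation Kv := (Kv mu nu c eps).
Local Notation KTu := (KTu mu nu c eps).
Local Notation U := (u_upd mu nu c eps).

Definition pos (v : Y -> R) := forall y, 0 < v y.

Definition sinkhorn_map (v : Y -> R) : Y -> R := vhat_upd mu nu c eps (U v).

Definition async_step (v : Y -> R) : Y -> R :=
  fun y => Num.min (v y) (sinkhorn_map v y).

Local Notation T := sinkhorn_map.

Lemma kernelK_gt0 x y : 0 < K x y.
Proof. by rewrite /kernelK !mulr_gt0 ?expR_gt0. Qed.

Lemma Kv_gt0 v : pos v -> forall x, 0 < Kv v x.
Proof. by move=> v_gt0 x; apply: (sumr_gt0 y0) => y; rewrite mulr_gt0 ?kernelK_gt0. Qed.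

Lemma u_upd_gt0 v : pos v -> forall x, 0 < U v x.
Proof. by move=> v_gt0 x; rewrite /u_upd divr_gt0 ?Kv_gt0. Qed.

Lemma KTu_u_upd_gt0 v : pos v -> forall y, 0 < KTu (U v) y.
Proof.
move=> v_gt0 y; apply: (sumr_gt0 x0) => x.
by rewrite mulr_gt0 ?kernelK_gt0 ?u_upd_gt0.
Qed.

Lemma sinkhorn_map_gt0 v : pos v -> pos (T v).
Proof. by move=> v_gt0 y; rewrite /T /vhat_upd divr_gt0 ?KTu_u_upd_gt0. Qed.

Lemma async_step_gt0 v : pos v -> pos (async_step v).
Proof. by move=> v_gt0 y; rewrite lt_min v_gt0 sinkhorn_map_gt0. Qed.

Lemma KvZ t v x : Kv (fun y => t * v y) x = t * Kv v x.
Proof. by rewrite /Defs.Kv mulr_sumr; apply: eq_bigr => y _; rewrite mulrCA. Qed.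

Lemma sinkhorn_mapZ t v : T (fun y => t * v y) = (fun y => t * T v y).
Proof.
have UZ x : U (fun y => t * v y) x = t^-1 * U v x.
  by rewrite /u_upd KvZ invfM mulrCA.
apply/funext => y; rewrite /T /vhat_upd /Defs.KTu.
under eq_bigr do rewrite UZ mulrCA.
by rewrite -mulr_sumr invfM invrK mulrCA.
Qed.

Lemma sinkhorn_map_le v w : pos v -> (forall y, v y <= w y) ->
  forall y, T v y <= T w y.
Proof.
move=> v_gt0 le_vw y.
have w_gt0 : pos w by move=> z; exact: lt_le_trans (v_gt0 z) (le_vw z).
have le_Kv x : Kv v x <= Kv w x.
  by apply: ler_sum => z _; rewrite ler_wpM2l // ltW ?kernelK_gt0.
have le_U x : U w x <= U v x.
  by rewrite /u_upd ler_pM2l // lef_pV2 ?posrE ?Kv_gt0.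
have le_KTu : KTu (U w) y <= KTu (U v) y.
  by apply: ler_sum => x _; rewrite ler_wpM2l // ltW ?kernelK_gt0.
by rewrite /T /vhat_upd ler_pM2l // lef_pV2 ?posrE ?KTu_u_upd_gt0.
Qed.

Lemma u_upd_row_sum v x : pos v -> \sum_y U v x * K x y * v y = mu x.
Proof.
move=> v_gt0; have -> : mu x = U v x * Kv v x.
  by rewrite /u_upd divfK ?gt_eqF ?Kv_gt0.
by rewrite /Defs.Kv mulr_sumr; apply: eq_bigr => y _; rewrite mulrA.
Qed.

Lemma sum_v_KTu v : pos v -> \sum_y v y * KTu (U v) y = 1.
Proof.
move=> v_gt0; rewrite -mu1.
transitivity (\sum_x \sum_y U v x * K x y * v y).
  rewrite exchange_big; apply: eq_bigr => y _; rewrite /Defs.KTu mulr_sumr.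
  by apply: eq_bigr => x _; rewrite mulrC (mulrC (K x y)).
by apply: eq_bigr => x _; exact: u_upd_row_sum.
Qed.

Lemma sinkhorn_map_KTu v y : pos v -> T v y * KTu (U v) y = nu y.
Proof. by move=> v_gt0; rewrite /T /vhat_upd divfK ?gt_eqF ?KTu_u_upd_gt0. Qed.

Lemma sinkhorn_map_fixed v : pos v -> (forall y, v y <= T v y) ->
  forall y, T v y = v y.
Proof.
move=> v_gt0 le_vT.
have sum0 : \sum_y (T v y - v y) * KTu (U v) y = 0.
  under eq_bigr do rewrite mulrBl sinkhorn_map_KTu //.
  by rewrite sumrB sum_v_KTu // nu1 subrr.
have terms_ge0 y : true -> 0 <= (T v y - v y) * KTu (U v) y.
  by move=> _; rewrite mulr_ge0 ?subr_ge0 // ltW ?KTu_u_upd_gt0.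
move=> y; have /eqP := @psumr_eq0P _ _ _ _ terms_ge0 sum0 y isT.
by rewrite mulf_eq0 (gt_eqF (KTu_u_upd_gt0 v_gt0 y)) orbF subr_eq0 => /eqP.
Qed.

Lemma u_upd_col_sum v y : pos v -> T v y = v y -> \sum_x U v x * K x y * v y = nu y.
Proof.
move=> v_gt0 v_fixed; rewrite -(sinkhorn_map_KTu y v_gt0) v_fixed /Defs.KTu mulr_sumr.
by apply: eq_bigr => x _; rewrite mulrC (mulrC (K x y)).
Qed.

Definition potential (v : Y -> R) :=
  \sum_x mu x * ln (Kv v x) - \sum_y nu y * ln (v y).

Lemma potentialZ t v : 0 < t -> pos v -> potential (fun y => t * v y) = potential v.
Proof.
move=> t_gt0 v_gt0; rewrite /potential.
have -> : \sum_x mu x * ln (Kv (fun y => t * v y) x) = ln t + \sum_x mu x * ln (Kv v x).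
  rewrite -[ln t]mul1r -mu1 mulr_suml -big_split; apply: eq_bigr => x _ /=.
  by rewrite KvZ lnM ?posrE ?Kv_gt0 // mulrDr mulrC.
have -> : \sum_y nu y * ln (t * v y) = ln t + \sum_y nu y * ln (v y).
  rewrite -[ln t]mul1r -nu1 mulr_suml -big_split; apply: eq_bigr => y _ /=.
  by rewrite lnM ?posrE // mulrDr mulrC.
by rewrite opprD addrACA subrr add0r.
Qed.

Lemma sum_ln_Kv_le v w : pos v -> pos w ->
  \sum_x mu x * ln (Kv w x) - \sum_x mu x * ln (Kv v x)
    <= \sum_y (w y - v y) * KTu (U v) y.
Proof.
move=> v_gt0 w_gt0.
have -> : \sum_y (w y - v y) * KTu (U v) y = \sum_x U v x * (Kv w x - Kv v x).
  rewrite /Defs.KTu; under eq_bigr do rewrite mulr_sumr.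
  rewrite exchange_big; apply: eq_bigr => x _; rewrite /Defs.Kv -sumrB mulr_sumr.
  by apply: eq_bigr => y _; ring.
rewrite -sumrB; apply: ler_sum => x _; rewrite -mulrBr /u_upd -mulrA.
by apply: ler_wpM2l; [exact: ltW | rewrite [_^-1 * _]mulrC lnB_le ?Kv_gt0].
Qed.

Definition descent_gap (v : Y -> R) y :=
  nu y * ((v y - async_step v y) / T v y - (ln (v y) - ln (async_step v y))).

Lemma descent_gap_gt0 v y : pos v -> T v y < v y -> 0 < descent_gap v y.
Proof.
move=> v_gt0 lt_Tv; have T_gt0 := sinkhorn_map_gt0 v_gt0 y.
rewrite /descent_gap /async_step (min_r (ltW lt_Tv)) -ln_div ?posrE //.
have r_gt0 : 0 < v y / T v y by rewrite divr_gt0.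
rewrite mulr_gt0 // subr_gt0 mulrBl divff ?gt_eqF // ln_lt_subr1 //.
by rewrite gt_eqF // ltr_pdivlMr // mul1r.
Qed.

Lemma descent_gap_ge0 v y : pos v -> 0 <= descent_gap v y.
Proof.
move=> v_gt0; have [le_vT|lt_Tv] := leP (v y) (T v y).
  by rewrite /descent_gap /async_step (min_l le_vT) !subrr mul0r subr0 mulr0.
exact/ltW/descent_gap_gt0.
Qed.

Lemma potential_async_step v : pos v ->
  potential (async_step v) + \sum_y descent_gap v y <= potential v.
Proof.
move=> v_gt0; set w := async_step v.
have := sum_ln_Kv_le v_gt0 (async_step_gt0 v_gt0).
have -> : \sum_y (w y - v y) * KTu (U v) y = \sum_y (w y - v y) * (nu y / T v y).
  apply: eq_bigr => y _; rewrite -(sinkhorn_map_KTu y v_gt0) [T v y * _]mulrC.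
  by rewrite mulfK ?gt_eqF ?sinkhorn_map_gt0.
have -> : \sum_y descent_gap v y = \sum_y (v y - w y) * (nu y / T v y)
    - (\sum_y nu y * ln (v y) - \sum_y nu y * ln (w y)).
  by rewrite -!sumrB; apply: eq_bigr => y _; rewrite /descent_gap -/w; ring.
have -> : \sum_y (v y - w y) * (nu y / T v y) = - \sum_y (w y - v y) * (nu y / T v y).
  by rewrite -sumrN; apply: eq_bigr => y _; rewrite -mulNr opprB.
rewrite /potential; lra.
Qed.

Definition log_kernel_bound := \sum_x \sum_y `|ln (K x y)|.

Lemma potential_lower_bound w y1 : pos w -> (forall y, w y <= 1) -> w y1 = 1 ->
  forall y, nu y * - ln (w y) <= potential w + log_kernel_bound.
Proof.
move=> w_gt0 w_le1 wy1 y.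
have first_ge : - log_kernel_bound <= \sum_x mu x * ln (Kv w x).
  rewrite -[- _]mul1r -mu1 mulr_suml; apply: ler_sum => x _.
  apply: ler_wpM2l; first exact: ltW.
  apply: (@le_trans _ _ (ln (K x y1))).
    rewrite lerNl; apply: le_trans (ler_norm _) _; rewrite normrN.
    apply: le_trans (ler_sum_term (f := fun x => \sum_y `|ln (K x y)|) x _) => /=.
      exact: (ler_sum_term (f := fun y => `|ln (K x y)|)).
    by move=> x'; apply: sumr_ge0.
  rewrite ler_ln ?posrE ?kernelK_gt0 ?Kv_gt0 // -[K x y1]mulr1 -wy1.
  apply: (ler_sum_term (f := fun y => K x y * w y)) => z.
  by rewrite mulr_ge0 // ltW ?kernelK_gt0.
have second_ge : nu y * - ln (w y) <= - \sum_y nu y * ln (w y).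
  rewrite -sumrN; under eq_bigr do rewrite -mulrN.
  apply: (ler_sum_term (f := fun y => nu y * - ln (w y))) => z.
  by rewrite mulr_ge0 ?oppr_ge0 ?ln_le0 // ltW.
rewrite /potential; lra.
Qed.

Definition potential_one := potential (fun _ => 1).

(* By [potential_lower_bound], [- ln (w y) <= (potential_one + log_kernel_bound) / nu y]
   whenever [max w = 1] and [potential w <= potential_one]. *)
Definition delta := expR (- (potential_one + log_kernel_bound) * \sum_y (nu y)^-1).

Definition box := [set w : Y -> R | forall y, `[delta, 1] (w y)].

Lemma potential_one_bound_ge0 : 0 <= potential_one + log_kernel_bound.
Proof.
have := @potential_lower_bound (fun _ => 1) y0 (fun _ => ltr01) (fun _ => lexx 1) erefl y0.
by rewrite ln1 oppr0 mulr0.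
Qed.

Lemma box_gt0 w : box w -> pos w.
Proof.
move=> Dw y; have := Dw y; rewrite /= in_itv /= => /andP[delta_le _].
exact: lt_le_trans (expR_gt0 _) delta_le.
Qed.

Lemma box_one : box (fun _ => 1).
Proof.
move=> y; rewrite /= in_itv /= lexx andbT expR_le1 mulNr oppr_le0.
rewrite mulr_ge0 ?potential_one_bound_ge0 // sumr_ge0 // => z _.
by rewrite invr_ge0 ltW.
Qed.

Lemma box_of_normalized w y1 : pos w -> (forall y, w y <= 1) -> w y1 = 1 ->
  potential w <= potential_one -> box w.
Proof.
move=> w_gt0 w_le1 wy1 w_le y; rewrite /= in_itv /= w_le1 andbT.
rewrite /delta -(lnK (w_gt0 y)) ler_expR mulNr lerNl.
apply: (@le_trans _ _ ((potential_one + log_kernel_bound) / nu y)).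
  rewrite ler_pdivlMr // mulrC.
  by have := potential_lower_bound w_gt0 w_le1 wy1 y; lra.
rewrite ler_wpM2l ?potential_one_bound_ge0 //.
by apply: (ler_sum_term (f := fun y => (nu y)^-1)) => z; rewrite invr_ge0 ltW.
Qed.

Lemma exists_rescaled_in_box w : pos w -> potential w <= potential_one ->
  exists2 t, 0 < t & box (fun y => t * w y).
Proof.
move=> w_gt0 w_le.
have [y1 _ w_le_wy1] := @arg_maxP _ R Y y0 xpredT w isT.
have wy1_gt0 := w_gt0 y1.
exists (w y1)^-1; first by rewrite invr_gt0.
apply: (box_of_normalized (y1 := y1)).
- by move=> y; rewrite mulr_gt0 ?invr_gt0.
- by move=> y; rewrite ler_pdivrMl // mulr1; exact: w_le_wy1.
- by rewrite mulVf ?gt_eqF.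
- by rewrite potentialZ ?invr_gt0.
Qed.

Section Continuity.
Context {S : Type} {F : set_system S} {FF : Filter F}.

Lemma Kv_cvg (g : S -> Y -> R) w x : (forall y, g s y @[s --> F] --> w y) ->
  Kv (g s) x @[s --> F] --> Kv w x.
Proof. by move=> gw; apply: cvg_sum => y; apply: cvgMl_tmp. Qed.

Lemma u_upd_cvg (g : S -> Y -> R) w x : pos w -> (forall y, g s y @[s --> F] --> w y) ->
  U (g s) x @[s --> F] --> U w x.
Proof.
move=> w_gt0 gw; apply: cvgMl_tmp; apply: cvgV; first by rewrite gt_eqF ?Kv_gt0.
exact: Kv_cvg.
Qed.

Lemma sinkhorn_map_cvg (g : S -> Y -> R) w y : pos w ->
  (forall y, g s y @[s --> F] --> w y) -> T (g s) y @[s --> F] --> T w y.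
Proof.
move=> w_gt0 gw; apply: cvgMl_tmp; apply: cvgV; first by rewrite gt_eqF ?KTu_u_upd_gt0.
by apply: cvg_sum => x; apply: cvgMl_tmp; apply: u_upd_cvg.
Qed.

Lemma potential_cvg (g : S -> Y -> R) w : pos w ->
  (forall y, g s y @[s --> F] --> w y) -> potential (g s) @[s --> F] --> potential w.
Proof.
move=> w_gt0 gw; apply: cvgB; apply: cvg_sum => i; apply: cvgMl_tmp.
- exact: (continuous_cvg _ (continuous_ln (Kv_gt0 w_gt0 i)) (Kv_cvg gw)).
- exact: (continuous_cvg _ (continuous_ln (w_gt0 i)) (gw i)).
Qed.

End Continuity.

Lemma exists_potential_min :
  exists2 w, box w & forall w', box w' -> potential w <= potential w'.
Proof.
have cont : {within box, continuous potential}.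
  apply: continuous_in_subspaceT => w /set_mem/box_gt0 w_gt0.
  apply: (@potential_cvg _ _ (nbhs_filter w) id) => // y.
  exact: (@proj_continuous Y (fun=> R) y w).
have [w /set_mem Dw w_min] :=
  compact_EVT_min (ex_intro _ _ box_one) (@compact_box R Y delta 1) cont.
by exists w => // w' Dw'; apply/w_min/mem_set.
Qed.

Lemma potential_min_le_sinkhorn_map w : box w ->
  (forall w', box w' -> potential w <= potential w') -> forall y, w y <= T w y.
Proof.
move=> Dw w_min; have w_gt0 := box_gt0 Dw; have step_gt0 := async_step_gt0 w_gt0.
have desc := potential_async_step w_gt0.
have gap_ge0 : 0 <= \sum_y descent_gap w y.
  by apply: sumr_ge0 => y _; exact: descent_gap_ge0.
have w_le_one := w_min _ box_one.
have [t t_gt0 /w_min] : exists2 t, 0 < t & box (fun y => t * async_step w y).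
  by apply: exists_rescaled_in_box => //; rewrite /potential_one; lra.
rewrite potentialZ // => min_le.
have gap0 : \sum_y descent_gap w y = 0 by apply/eqP; rewrite eq_le gap_ge0; lra.
move=> y; rewrite leNgt; apply/negP => /(descent_gap_gt0 w_gt0)/gt_eqF/eqP; apply.
exact: (@psumr_eq0P _ _ _ _ (fun y _ => descent_gap_ge0 y w_gt0) gap0 y isT).
Qed.

Lemma exists_sinkhorn_fixed : exists2 v, pos v & forall y, T v y = v y.
Proof.
have [w Dw w_min] := exists_potential_min.
exists w; first exact: box_gt0.
apply: sinkhorn_map_fixed; first exact: box_gt0.
exact: potential_min_le_sinkhorn_map.
Qed.

Section Iteration.
Variables (v0 : Y -> R) (v0_gt0 : pos v0).
Local Notation vi := (v_iter mu nu c eps v0).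

Lemma v_iterS l : vi l.+1 = async_step (vi l).
Proof. by []. Qed.

Lemma fixed_le_v_iter p : pos p -> (forall y, T p y = p y) -> (forall y, p y <= v0 y) ->
  forall l y, p y <= vi l y.
Proof.
move=> p_gt0 p_fixed p_le; elim=> [|l IHl] y //.
by rewrite v_iterS /async_step le_min IHl -p_fixed sinkhorn_map_le.
Qed.

Lemma exists_fixed_le_v0 :
  exists p, [/\ pos p, forall y, T p y = p y & forall y, p y <= v0 y].
Proof.
have [v v_gt0 v_fixed] := exists_sinkhorn_fixed.
have [ym _ ym_min] := @arg_minP _ R Y y0 xpredT (fun y => v0 y / v y) isT.
pose t := v0 ym / v ym; have t_gt0 : 0 < t by rewrite divr_gt0.
exists (fun y => t * v y); split.
- by move=> y; rewrite mulr_gt0.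
- by move=> y; rewrite sinkhorn_mapZ v_fixed.
- by move=> y; rewrite -ler_pdivlMr ?ym_min.
Qed.

Lemma v_iter_cvg_fixed :
  exists v, [/\ pos v, forall y, T v y = v y & forall y, vi l y @[l --> \oo] --> v y].
Proof.
have [p [p_gt0 p_fixed p_le]] := exists_fixed_le_v0.
pose v y := inf [set vi l y | l in setT].
have vi_cvg y : vi l y @[l --> \oo] --> v y.
  apply: nonincreasing_cvgn; first by apply/nonincreasing_seqP => l; rewrite ge_min lexx.
  by exists (p y) => _ [l _ <-]; exact: fixed_le_v_iter.
have p_le_v y : p y <= v y.
  by apply: ler_cvg_to (cvg_cst _) (vi_cvg y) _; apply: nearW => l; exact: fixed_le_v_iter.
have v_gt0 : pos v by move=> y; exact: lt_le_trans (p_gt0 y) (p_le_v y).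
exists v; split => //; apply: sinkhorn_map_fixed => // y.
have viS_cvg : vi l.+1 y @[l --> \oo] --> v y by have := vi_cvg y; rewrite -cvg_shiftS.
apply: ler_cvg_to viS_cvg (sinkhorn_map_cvg v_gt0 vi_cvg) _.
by apply: nearW => l; rewrite v_iterS ge_min lexx orbT.
Qed.

Lemma u_iter_cvg v x : pos v -> (forall y, vi l y @[l --> \oo] --> v y) ->
  u_iter mu nu c eps v0 l x @[l --> \oo] --> U v x.
Proof. by move=> v_gt0 vi_cvg; rewrite -cvg_shiftS; exact: u_upd_cvg. Qed.

Lemma q_iter_cvg v : pos v -> (forall y, vi l y @[l --> \oo] --> v y) ->
  q_iter mu nu c eps v0 l @[l --> \oo] --> (1 : R).
Proof.
move=> v_gt0 vi_cvg; rewrite -mu1.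
under [X in _ --> X]eq_bigr do rewrite -(u_upd_row_sum _ v_gt0).
apply: cvg_sum => x; apply: cvg_sum => y; apply: cvgM; last exact: vi_cvg.
by apply: cvgMr_tmp; exact: u_iter_cvg.
Qed.

End Iteration.

End Sinkhorn.

Theorem mainTheorem5 (R : realType) (X Y : finType)
  (mu : X -> R) (nu : Y -> R) (c : X -> Y -> R) (eps : R) (v0 : Y -> R) :
  (forall x, 0 < mu x) -> \sum_(x : X) mu x = 1 ->
  (forall y, 0 < nu y) -> \sum_(y : Y) nu y = 1 ->
  (forall x y, 0 <= c x y) -> 0 < eps ->
  (forall y, 0 < v0 y) ->
  exists (u : X -> R) (v : Y -> R),
    ((forall x, 0 < u x) /\ (forall y, 0 < v y)) /\
    (forall x, \sum_(y : Y) u x * kernelK mu nu c eps x y * v y = mu x) /\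
    (forall y, \sum_(x : X) u x * kernelK mu nu c eps x y * v y = nu y) /\
    (forall x, u_iter mu nu c eps v0 l x @[l --> \oo] --> u x) /\
    (forall y, v_iter mu nu c eps v0 l y @[l --> \oo] --> v y) /\
    (q_iter mu nu c eps v0 l @[l --> \oo] --> (1 : R)).
Proof.
(* The kernel is positive whatever [c] and [eps] are. *)
move=> mu_gt0 mu1 nu_gt0 nu1 _ _ v0_gt0.
have [x0] : inhabited X by apply: (inhabited_of_sum_neq0 (f := mu)); rewrite mu1 oner_neq0.
have [y0] : inhabited Y by apply: (inhabited_of_sum_neq0 (f := nu)); rewrite nu1 oner_neq0.
have [v [v_gt0 v_fixed vi_cvg]] := v_iter_cvg_fixed c eps mu_gt0 mu1 nu_gt0 nu1 x0 y0 v0_gt0.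
exists (u_upd mu nu c eps v), v.
split; first by split=> // x; exact: (u_upd_gt0 c eps mu_gt0 nu_gt0 y0 v_gt0).
split; first by move=> x; exact: (u_upd_row_sum c eps mu_gt0 nu_gt0 y0 x v_gt0).
split; first by move=> y; exact: (u_upd_col_sum mu_gt0 nu_gt0 x0 y0 v_gt0 (v_fixed y)).
split; first by move=> x; exact: (u_iter_cvg mu_gt0 nu_gt0 y0 v_gt0 vi_cvg).
by split=> //; exact: (q_iter_cvg mu_gt0 mu1 nu_gt0 y0 v_gt0 vi_cvg).
Qed.
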